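(* Let $n$ range over odd square-free integers greater than $1$, let $r$ be real, and let $V$ be drawn uniformly at random from $\mathcal{V}_n$. Then, as $n\to\infty$, \[ \Pr\Big(\|V_r\|_4^4<288\,[\psi(n)]^2\log n\Big)\to 1, \] where $\psi(n)=n-\phi(n)$.
   Context: $\phi$ is Euler's totient function. For $A\in\mathbb{C}[z]$, $\|A\|_4=\left(\frac{1}{2\pi}\int_0^{2\pi}|A(e^{i\theta})|^4 d\theta\right)^{1/4}$. For a polynomial $A$ of degree at most $n-1$ and real $r$, the rotation is $A_r(z)=z^{-\lfloor nr\rfloor}A(z)\bmod (z^n-1)$. $\mathcal{V}_n$ is the set of polynomials $\sum_{j=0}^{n-1}v_jz^j$ with $v_j\in\{0,-1,+1\}$ and $v_j=0$ if and only if $\gcd(j,n)=1$. *)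

From HB Require Import structures.
From mathcomp Require Import all_boot all_order all_algebra.
From mathcomp Require Import all_classical all_reals all_analysis.
Set Implicit Arguments. Unset Strict Implicit. Unset Printing Implicit Defensive.
Import Order.TTheory GRing.Theory Num.Theory.
Import numFieldNormedType.Exports.
Local Open Scope ring_scope.

Definition squarefree (n : nat) : bool :=
  [forall p : 'I_n.+1, prime p ==> ~~ (p * p %| n)%N].

Definition psi (n : nat) : nat := (n - totient n)%N.

Definition coef3 (R : pzRingType) (c : 'I_3) : R :=
  if val c == 0%N then 0 else if val c == 1%N then 1 else -1.

(* V_n : coefficient vectors v_0..v_{n-1} in {0,-1,1}, v_j = 0 iff gcd(j,n)=1 *)
Definition Vset (n : nat) : {set {ffun 'I_n -> 'I_3}} :=
  [set v : {ffun 'I_n -> 'I_3} | [forall j : 'I_n, (val (v j) == 0%N) == coprime j n]].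

(* coefficients of the rotation A_r(z) = z^{-floor(nr)} A(z) mod (z^n - 1):
   the coefficient of z^j is a_{(j + floor(n r)) mod n}. *)
Definition rotc (R : realType) (n : nat) (r : R) (a : 'I_n -> R) (j : 'I_n) : R :=
  let k := ((j%:Z + Num.floor (n%:R * r)) %% n%:Z)%Z in
  match k with
  | Posz m => (if (m < n)%N as b return (m < n)%N = b -> R then
                 fun H => a (Ordinal H) else fun _ => 0) erefl
  | Negz _ => 0
  end.

(* |A(e^{i theta})|^2 for a real-coefficient polynomial sum_j a_j z^j *)
Definition absA2 (R : realType) (n : nat) (a : 'I_n -> R) (t : R) : R :=
  (\sum_(j < n) a j * cos (j%:R * t)) ^+ 2 + (\sum_(j < n) a j * sin (j%:R * t)) ^+ 2.

Definition L4pow4 (R : realType) (n : nat) (a : 'I_n -> R) : R :=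
  (2 * pi)^-1 * \int[lebesgue_measure]_(t in `[0, 2 * pi]%classic) (absA2 a t ^+ 2).

Definition prob_event (R : realType) (n : nat) (r : R) : R :=
  #|[set v in Vset n |
      L4pow4 (rotc r (fun j => coef3 R (v j))) < 288 * (psi n)%:R ^+ 2 * ln (n%:R)]|%:R
  / #|Vset n|%:R.

From mathcomp Require Import all_boot all_order all_algebra.
From mathcomp Require Import all_classical all_reals all_analysis.
From mathcomp Require Import ring lra.
Import Order.TTheory GRing.Theory Num.Theory.
Import numFieldNormedType.Exports.
Set Implicit Arguments. Unset Strict Implicit. Unset Printing Implicit Defensive.
Local Open Scope ring_scope.

(* Rotating by [r] only permutes the coefficients, and the coefficients of a uniform
   [V] are independent symmetric signs on the psi(n) positions not coprime to [n]
   (and 0 elsewhere).  For each [theta], |V_r(e^{i theta})|^2 = X^2 + Y^2 where [X]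
   and [Y] are weighted sign sums whose variances add up to psi(n), because
   cos^2 + sin^2 = 1.  Khintchine's fourth-moment bound E X^4 <= 3 (E X^2)^2 then
   gives E ||V_r||_4^4 <= 6 psi(n)^2, and Markov's inequality bounds the probability
   of the complementary event by 1 / (48 log n). *)

Definition opp3 (x : 'I_3) : 'I_3 :=
  if val x == 0%N then x else if val x == 1%N then inord 2 else inord 1.

Lemma opp3K : involutive opp3.
Proof. by case=> [[|[|[|m]]] Hm] //; apply: val_inj; rewrite /opp3 /= !inordK. Qed.

Lemma coef3_opp3 (R : pzRingType) (x : 'I_3) : coef3 R (opp3 x) = - coef3 R x.
Proof. by case: x => [[|[|[|m]]] Hm]; rewrite /opp3 /coef3 /= ?inordK ?oppr0 ?opprK. Qed.

Lemma opp3_eq0 (x : 'I_3) : (val (opp3 x) == 0%N) = (val x == 0%N).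
Proof. by case: x => [[|[|[|m]]] Hm]; rewrite /opp3 /= ?inordK. Qed.

Section SignSymmetry.

Variable n : nat.
Implicit Types (k : 'I_n) (v : {ffun 'I_n -> 'I_3}).

Definition flipv k v : {ffun 'I_n -> 'I_3} :=
  [ffun i => if i == k then opp3 (v i) else v i].

Lemma flipvK k : involutive (flipv k).
Proof. by move=> v; apply/ffunP => i; rewrite !ffunE; case: eqP => // _; apply: opp3K. Qed.

Lemma flipv_Vset k v : (flipv k v \in Vset n) = (v \in Vset n).
Proof.
by rewrite !inE; apply: eq_forallb => i; rewrite ffunE; case: (i == k); rewrite ?opp3_eq0.
Qed.

Lemma coef3_Vset_coprime (R : pzRingType) k v :
  v \in Vset n -> coprime k n -> coef3 R (v k) = 0.
Proof. by rewrite inE => /forallP /(_ k) /eqP; rewrite /coef3 => -> ->. Qed.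

Lemma coef3_Vset_sqr (R : pzRingType) k v :
  v \in Vset n -> ~~ coprime k n -> coef3 R (v k) ^+ 2 = 1.
Proof.
rewrite inE => /forallP /(_ k) /eqP vk /negbTE kn; rewrite /coef3 vk kn.
by case: eqP; rewrite ?sqrrN expr1n.
Qed.

(* Flipping the sign of coordinate [k] is an involution of [Vset n] that negates the
   summand. *)
Lemma sum_Vset_coef3M_eq0 (R : numDomainType) k (h : {ffun 'I_n -> 'I_3} -> R) :
  (forall v, h (flipv k v) = h v) -> \sum_(v in Vset n) coef3 R (v k) * h v = 0.
Proof.
move=> hk; set S := LHS; have : S = - S.
  rewrite {1}/S (reindex_inj (can_inj (flipvK k))) /= -sumrN.
  apply: eq_big => [v|v _]; first by rewrite flipv_Vset.
  by rewrite hk ffunE eqxx coef3_opp3 mulNr.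
by move/eqP; rewrite -addr_eq0 -mulr2n mulrn_eq0 => /eqP.
Qed.

End SignSymmetry.

Section Moments.

Variables (R : realDomainType) (n : nat) (c : 'I_n -> R).
Implicit Types (k : 'I_n) (s : seq 'I_n) (v : {ffun 'I_n -> 'I_3}).

Definition wsum s v : R := \sum_(k <- s) coef3 R (v k) * c k.

Definition wvar s : R := \sum_(k <- s | ~~ coprime k n) c k ^+ 2.

Local Notation K := (#|Vset n|%:R : R).

Lemma sum_Vset_cst (x : R) : \sum_(v in Vset n) x = K * x.
Proof. by rewrite sumr_const mulr_natl. Qed.

Lemma wvar_ge0 s : 0 <= wvar s.
Proof. by apply: sumr_ge0 => k _; apply: sqr_ge0. Qed.

Lemma wsum_flipv k s v : k \notin s -> wsum s (flipv k v) = wsum s v.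
Proof.
move=> ks; apply: eq_big_seq => i si; rewrite ffunE.
by case: eqP => // ik; rewrite -ik si in ks.
Qed.

Lemma sum_Vset_coef3M_wsumX k s m : k \notin s ->
  \sum_(v in Vset n) coef3 R (v k) * wsum s v ^+ m = 0.
Proof. by move=> ks; apply: sum_Vset_coef3M_eq0 => v; rewrite wsum_flipv. Qed.

Lemma wsum_cons_coprime k s v : v \in Vset n -> coprime k n -> wsum (k :: s) v = wsum s v.
Proof. by move=> vV kn; rewrite /wsum big_cons coef3_Vset_coprime // mul0r add0r. Qed.

Lemma wvar_cons k s : wvar (k :: s) = (if coprime k n then 0 else c k ^+ 2) + wvar s.
Proof. by rewrite /wvar big_cons; case: coprime; rewrite ?add0r. Qed.

(* The odd terms of the expansions below are written with [^+ 1] and [^+ 3] so that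
   [sum_Vset_coef3M_wsumX] kills them. *)
Lemma sum_Vset_wsum_sqr s : uniq s -> \sum_(v in Vset n) wsum s v ^+ 2 = K * wvar s.
Proof.
elim: s => [_|k s IHs /= /andP[ks /IHs {}IHs]].
  by rewrite /wvar big_nil mulr0; apply: big1 => v _; rewrite /wsum big_nil expr0n.
rewrite wvar_cons; case: ifPn => kn.
  by rewrite add0r -IHs; apply: eq_bigr => v vV; rewrite wsum_cons_coprime.
have -> : \sum_(v in Vset n) wsum (k :: s) v ^+ 2 = \sum_(v in Vset n)
    (c k ^+ 2 + 2 * c k * (coef3 R (v k) * wsum s v ^+ 1) + wsum s v ^+ 2).
  apply: eq_bigr => v vV; rewrite /wsum big_cons -/(wsum s v).
  have e2 := coef3_Vset_sqr R vV kn; set e := coef3 R (v k) in e2 *.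
  by rewrite sqrrD exprMn e2 mul1r; ring.
rewrite !big_split /= sum_Vset_cst -mulr_sumr sum_Vset_coef3M_wsumX // mulr0 addr0 IHs.
by rewrite mulrDr.
Qed.

Lemma sum_Vset_wsum_pow4 s : uniq s ->
  \sum_(v in Vset n) wsum s v ^+ 4 <= 3 * K * wvar s ^+ 2.
Proof.
elim: s => [_|k s IHs /= /andP[ks us]].
  rewrite /wvar big_nil expr0n mulr0 big1 // => v _.
  by rewrite /wsum big_nil expr0n.
have {}IHs := IHs us; rewrite wvar_cons; case: ifPn => kn.
  by rewrite add0r (eq_bigr (fun v => wsum s v ^+ 4)) // => v vV; rewrite wsum_cons_coprime.
set x := c k ^+ 2; have x_ge0 : 0 <= x by apply: sqr_ge0.
have -> : \sum_(v in Vset n) wsum (k :: s) v ^+ 4 = \sum_(v in Vset n)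
    (x ^+ 2 + 4 * c k * x * (coef3 R (v k) * wsum s v ^+ 1) + 6 * x * wsum s v ^+ 2
     + 4 * c k * (coef3 R (v k) * wsum s v ^+ 3) + wsum s v ^+ 4).
  apply: eq_bigr => v vV; rewrite /wsum big_cons -/(wsum s v).
  have e2 := coef3_Vset_sqr R vV kn; set e := coef3 R (v k) in e2 *.
  set y := wsum s v; rewrite /x.
  have -> : (e * c k + y) ^+ 4 = (e ^+ 2) ^+ 2 * c k ^+ 4
      + 4 * c k ^+ 3 * e ^+ 2 * (e * y) + 6 * e ^+ 2 * c k ^+ 2 * y ^+ 2
      + 4 * c k * (e * y ^+ 3) + y ^+ 4 by ring.
  by rewrite e2; ring.
rewrite !big_split /= sum_Vset_cst -!mulr_sumr !sum_Vset_coef3M_wsumX // !mulr0 !addr0.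
rewrite sum_Vset_wsum_sqr //.
have := wvar_ge0 s; have : (0 : R) <= K by []; nra.
Qed.

End Moments.

Section Rotation.

Variables (n : nat) (f : int).

Lemma rot_subproof (j : 'I_n) : (`|((j%:Z + f) %% n%:Z)%Z|%N < n)%N.
Proof.
have n_gt0 : (0 < n)%N by apply: leq_ltn_trans (ltn_ord j).
by rewrite -ltz_nat gez0_abs ?modz_ge0 ?ltz_pmod // ?ltz_nat // eqz_nat -lt0n.
Qed.

Definition rot (j : 'I_n) : 'I_n := Ordinal (rot_subproof j).

Lemma rotE (j : 'I_n) : (rot j)%:Z = ((j%:Z + f) %% n%:Z)%Z.
Proof.
have n_gt0 : (0 < n)%N by apply: leq_ltn_trans (ltn_ord j).
by rewrite /= gez0_abs // modz_ge0 // eqz_nat -lt0n.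
Qed.

End Rotation.

Lemma rotK n (f : int) : cancel (@rot n f) (@rot n (- f)).
Proof.
move=> j; apply/ord_inj/eqP; rewrite -eqz_nat !rotE modzDml addrK.
by rewrite modz_small // ltz_nat ltn_ord.
Qed.

Lemma rotKV n (f : int) : cancel (@rot n (- f)) (@rot n f).
Proof. by have := @rotK n (- f); rewrite opprK. Qed.

Lemma rotc_rot (R : realType) n (r : R) (a : 'I_n -> R) (j : 'I_n) :
  rotc r a j = a (rot (Num.floor (n%:R * r)) j).
Proof.
(* [rotc] guards the index by a dependent [if]; its unreachable branch returns 0. *)
rewrite /rotc -rotE; case: (rot _ j) => m m_lt /=.
suff eq_if b (e : (m < n)%N = b) :
    (if b as b0 return (m < n)%N = b0 -> R then fun H => a (Ordinal H) else fun=> 0) e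
    = a (Ordinal m_lt) by apply: eq_if.
by case: b e => e; [congr a; apply: val_inj | rewrite m_lt in e].
Qed.

Lemma card_not_coprime n : #|[set k : 'I_n | ~~ coprime k n]| = psi n.
Proof.
have totientE : totient n = #|[set k : 'I_n | coprime k n]|.
  rewrite totient_count_coprime big_mkord -sum1dep_card [RHS]big_mkcond /=.
  by apply: eq_bigr => k _; rewrite coprime_sym; case: coprime.
have -> : [set k : 'I_n | ~~ coprime k n] = ~: [set k : 'I_n | coprime k n].
  by apply/setP => k; rewrite !inE.
rewrite /psi totientE -[n in (n - _)%N](card_ord n).
by rewrite -(cardsC [set k : 'I_n | coprime k n]) addKn.
Qed.

Lemma psi_gt0 n : (1 < n)%N -> (0 < psi n)%N.
Proof.
move=> n_gt1; rewrite -card_not_coprime; apply/card_gt0P.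
by exists (Ordinal (ltnW n_gt1)); rewrite inE /coprime gcd0n neq_ltn n_gt1 orbT.
Qed.

Lemma wvarD_unit (R : realDomainType) n (c d : 'I_n -> R) :
  (forall k, c k ^+ 2 + d k ^+ 2 = 1) ->
  wvar c (index_enum 'I_n) + wvar d (index_enum 'I_n) = (psi n)%:R.
Proof.
move=> cd1; rewrite /wvar -big_split /= (eq_bigr (fun=> 1)) // sumr_const.
by rewrite -card_not_coprime cardsE.
Qed.

Lemma sum_Vset_norm_pow4 (R : realDomainType) n (c d : 'I_n -> R) s : uniq s ->
  \sum_(v in Vset n) (wsum c s v ^+ 2 + wsum d s v ^+ 2) ^+ 2
    <= 6 * #|Vset n|%:R * (wvar c s + wvar d s) ^+ 2.
Proof.
move=> us; apply: (@le_trans _ _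
  (\sum_(v in Vset n) (2 * wsum c s v ^+ 4 + 2 * wsum d s v ^+ 4))).
  apply: ler_sum => v _; set a := wsum c s v; set b := wsum d s v.
  have -> : 2 * a ^+ 4 + 2 * b ^+ 4 = (a ^+ 2 + b ^+ 2) ^+ 2 + (a ^+ 2 - b ^+ 2) ^+ 2 by ring.
  by rewrite lerDl sqr_ge0.
rewrite big_split /= -!mulr_sumr.
have := sum_Vset_wsum_pow4 c us; have := sum_Vset_wsum_pow4 d us.
have : 0 <= #|Vset n|%:R * (wvar c s * wvar d s) :> R by rewrite !mulr_ge0 ?wvar_ge0.
set K := (#|Vset n|%:R : R); set A := wvar c s; set B := wvar d s.
have -> : 6 * K * (A + B) ^+ 2
    = 2 * (3 * K * A ^+ 2) + 2 * (3 * K * B ^+ 2) + 12 * (K * (A * B)) by ring.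
lra.
Qed.

Lemma sum_rotcM (R : realType) n (r : R) (a g : 'I_n -> R) :
  \sum_(j < n) rotc r a j * g j
    = \sum_(k < n) a k * g (rot (- Num.floor (n%:R * r)) k).
Proof.
rewrite (reindex_inj (can_inj (rotK (- Num.floor (n%:R * r))))).
by apply: eq_bigr => k _; rewrite rotc_rot rotKV.
Qed.

Lemma absA2_rotc (R : realType) n (r t : R) (a : 'I_n -> R) :
  let f := Num.floor (n%:R * r) in
  absA2 (rotc r a) t = (\sum_(k < n) a k * cos ((rot (- f) k)%:R * t)) ^+ 2
                       + (\sum_(k < n) a k * sin ((rot (- f) k)%:R * t)) ^+ 2.
Proof.
rewrite /absA2 (sum_rotcM r a (fun j => cos (j%:R * t))).
by rewrite (sum_rotcM r a (fun j => sin (j%:R * t))).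
Qed.

Lemma sum_Vset_absA2_rotc_sqr (R : realType) n (r t : R) :
  \sum_(v in Vset n) absA2 (rotc r (fun j => coef3 R (v j))) t ^+ 2
    <= 6 * #|Vset n|%:R * (psi n)%:R ^+ 2.
Proof.
set f := Num.floor (n%:R * r).
rewrite -(@wvarD_unit R n (fun k => cos ((rot (- f) k)%:R * t))
                          (fun k => sin ((rot (- f) k)%:R * t))) => [|k]; last exact: cos2Dsin2.
under eq_bigr => v _ do rewrite absA2_rotc.
exact: sum_Vset_norm_pow4 (index_enum_uniq _).
Qed.

Lemma continuous_sum (R : realType) (I : Type) (s : seq I) (P : pred I) (F : I -> R -> R) :
  (forall i, continuous (F i)) -> continuous (fun t => \sum_(i <- s | P i) F i t).
Proof.
move=> Fc; rewrite -fct_sumE; elim/big_ind: _ => //.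
- exact: cst_continuous.
- by move=> f g fc gc x; apply: (continuousD (fc x) (gc x)).
Qed.

Lemma continuous_integrable_itv (R : realType) (a b : R) (f : R -> R) : continuous f ->
  lebesgue_measure.-integrable `[a, b]%classic (EFin \o f).
Proof.
move=> fc; apply: continuous_compact_integrable; first exact: segment_compact.
exact: continuous_subspaceT.
Qed.

Lemma Rintegral_sum (R : realType) (a b : R) (I : Type) (s : seq I) (P : pred I)
    (F : I -> R -> R) : (forall i, continuous (F i)) ->
  \int[lebesgue_measure]_(t in `[a, b]%classic) (\sum_(i <- s | P i) F i t)
    = \sum_(i <- s | P i) \int[lebesgue_measure]_(t in `[a, b]%classic) F i t.
Proof.
move=> Fc; elim: s => [|i s IHs].
  under eq_Rintegral do rewrite big_nil.
  by rewrite big_nil Rintegral_cst ?mul0r //; apply: measurable_itv.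
rewrite big_cons; case: ifP => Pi; last by under eq_Rintegral do rewrite big_cons Pi.
under eq_Rintegral do rewrite big_cons Pi.
rewrite RintegralD ?IHs //.
- exact: continuous_integrable_itv.
- exact/continuous_integrable_itv/continuous_sum.
Qed.

Lemma continuous_absA2 (R : realType) n (a : 'I_n -> R) : continuous (absA2 a).
Proof.
have sqr_sum (g : R -> R) : continuous g ->
    continuous (fun t : R => (\sum_(j < n) a j * g (j%:R * t)) ^+ 2).
  move=> gc t; apply: (continuous_comp _ (@exprn_continuous R 2 _)).
  apply: (continuous_sum (F := fun j (t : R) => a j * g (j%:R * t))) => j x.
  apply: continuousM; first exact: cst_continuous.
  by apply: continuous_comp; [apply: mulrl_continuous | apply: gc].
rewrite /absA2 => t.
exact: (continuousD (sqr_sum _ (@continuous_cos R) t) (sqr_sum _ (@continuous_sin R) t)).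
Qed.

Lemma L4pow4_ge0 (R : realType) n (a : 'I_n -> R) : 0 <= L4pow4 a.
Proof.
rewrite mulr_ge0 ?invr_ge0 ?mulr_ge0 ?pi_ge0 //.
by apply: Rintegral_ge0 => t _; apply: sqr_ge0.
Qed.

Lemma lebesgue_measure_itvcc (R : realType) (a b : R) : a < b ->
  fine (@lebesgue_measure R `[a, b]%classic) = b - a.
Proof. by move=> ab; rewrite lebesgue_measure_itv /= lte_fin ab. Qed.

Lemma sum_Vset_L4pow4_rotc (R : realType) (r : R) n :
  \sum_(v in Vset n) L4pow4 (rotc r (fun j => coef3 R (v j)))
    <= 6 * #|Vset n|%:R * (psi n)%:R ^+ 2.
Proof.
set M := 6 * _ * _.
have sqr_cont (a : 'I_n -> R) : continuous (fun t => absA2 a t ^+ 2).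
  by move=> t; apply: (continuous_comp _ (@exprn_continuous R 2 _)); apply: continuous_absA2.
have pi2_gt0 : 0 < 2 * pi :> R by rewrite mulr_gt0 ?pi_gt0.
rewrite /L4pow4 -mulr_sumr -Rintegral_sum //.
apply: (@le_trans _ _ ((2 * pi)^-1 * \int[lebesgue_measure]_(t in `[0, 2 * pi]%classic) M)).
  rewrite ler_pM2l ?invr_gt0 //; apply: le_Rintegral => //.
  - exact/continuous_integrable_itv/continuous_sum.
  - exact/continuous_integrable_itv/cst_continuous.
  - by move=> t _; apply: sum_Vset_absA2_rotc_sqr.
rewrite Rintegral_cst // lebesgue_measure_itvcc // subr0.
by rewrite mulrC mulfK ?gt_eqF.
Qed.

Lemma markov_card (R : numDomainType) (T : finType) (S : {set T}) (f : T -> R) (a : R) :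
  (forall x, x \in S -> 0 <= f x) ->
  #|[set x in S | a <= f x]|%:R * a <= \sum_(x in S) f x.
Proof.
move=> f_ge0; rewrite (big_setID [set x | a <= f x]) /= -setIdE.
rewrite -[leLHS]addr0 lerD ?sumr_ge0 // => [|x]; last by rewrite inE => /andP[_ /f_ge0].
rewrite mulr_natl -sumr_const; apply: ler_sum => x; rewrite inE => /andP[_ //].
Qed.

Lemma card_Vset_gt0 n : (0 < #|Vset n|)%N.
Proof.
apply/card_gt0P; exists [ffun j : 'I_n => if coprime j n then ord0 else inord 1].
by rewrite inE; apply/forallP => j; rewrite ffunE; case: coprime; rewrite //= inordK.
Qed.

Lemma prob_event_ge (R : realType) (r : R) n : (1 < n)%N ->
  1 - (48 * ln n%:R)^-1 <= prob_event n r.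
Proof.
move=> n_gt1.
set L := fun v : {ffun 'I_n -> 'I_3} => L4pow4 (rotc r (fun j => coef3 R (v j))).
set P := (psi n)%:R : R; set T := 288 * P ^+ 2 * ln n%:R.
set K := #|Vset n|%:R : R; set b := #|[set v in Vset n | T <= L v]|%:R : R.
have K_gt0 : 0 < K by rewrite ltr0n card_Vset_gt0.
have P_gt0 : 0 < P by rewrite ltr0n psi_gt0.
have ln_gt0 : 0 < ln n%:R :> R by rewrite ln_gt0 // ltr1n.
have card_below : #|[set v in Vset n | L v < T]|%:R = K - b.
  apply/eqP; rewrite eq_sym subr_eq -natrD eqr_nat -(cardsID [set v | L v < T] (Vset n)).
  rewrite -setIdE eqn_add2l; apply/eqP/eq_card => v; rewrite !inE -leNgt.
  by rewrite andbC.
have b_le : b * (48 * ln n%:R) <= K.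
  have bT : b * T <= 6 * K * P ^+ 2 :=
    le_trans (markov_card (f := L) T (fun v _ => L4pow4_ge0 _)) (sum_Vset_L4pow4_rotc r n).
  rewrite -(ler_pM2l (mulr_gt0 (ltr0n R 6) (exprn_gt0 2 P_gt0))).
  by rewrite mulrAC [leRHS]mulrAC; move: bT; rewrite /T; congr (_ <= _); ring.
rewrite /prob_event -/L -/T card_below mulrBl divff ?gt_eqF // lerD2l lerN2.
by rewrite ler_pdivrMr // mulrC ler_pdivlMr ?mulr_gt0.
Qed.

Theorem lemma15 (R : realType) (r : R) :
  forall eps : R, 0 < eps ->
  exists N : nat, forall n : nat, (N <= n)%N -> (1 < n)%N -> odd n -> squarefree n ->
    1 - eps < prob_event n r.
Proof.
move=> eps eps_gt0; exists (Num.truncn (expR eps^-1)).+1 => n Nn n_gt1 _ _.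
apply: (lt_le_trans _ (prob_event_ge r n_gt1)); rewrite ltrD2l ltrN2.
have ln_gt : eps^-1 < ln n%:R.
  rewrite -[eps^-1]expRK ltr_ln ?posrE ?expR_gt0 ?ltr0n ?(ltn_trans _ n_gt1) //.
  by apply: (lt_le_trans (truncnS_gt _)); rewrite ler_nat.
have ln_gt0 : 0 < ln n%:R :> R by apply: lt_trans ln_gt; rewrite invr_gt0.
rewrite invf_plt ?posrE ?mulr_gt0 //; apply: (lt_le_trans ln_gt).
by rewrite ler_peMl ?(ltW ln_gt0) ?ler1n.
Qed.
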